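(* Let $q$ be a prime power, $n\ge 3$, and let $\Phi_1$ be the set of lines of $\mathrm{AG}(n,q)$. Let $V_0,V_1,V_2,V_3$ be the common eigenspaces of the association scheme on $\Phi_1$ described in the context. Then the characteristic vectors of the point-pencils of $\mathrm{AG}(n,q)$ form a basis of $V_0\perp V_1$.
   Context: $\mathrm{AG}(n,q)$ is $\mathrm{PG}(n,q)$ with a hyperplane $\pi_\infty$ removed; affine lines are projective lines not contained in $\pi_\infty$. Define relations on $\Phi_1$: $(\ell,\ell')\in R_0$ if $\ell=\ell'$; $\in R_1$ if they meet in an affine point; $\in R_2$ if they are distinct and meet in a point of $\pi_\infty$; $\in R_3$ if they are disjoint in $\mathrm{PG}(n,q)$. Let $B_1,B_2,B_3$ be the corresponding adjacency matrices (real $|\Phi_1|\times|\Phi_1|$). These commute and $\mathbb{R}^{\Phi_1}$ is the orthogonal direct sum of four common eigenspaces $V_0,V_1,V_2,V_3$, on which $(B_1,B_2,B_3)$ act as the scalars: on $V_0$ (spanned by the all-ones vector) $\left(\frac{q^{n+1}-q^2}{q-1},\,q^{n-1}-1,\,\frac{q^2-(q+1)q^n+q^{2n-1}}{q-1}\right)$; on $V_1$ $\left(\frac{q^n-q^2}{q-1},\,-1,\,\frac{q^2-q^n}{q-1}\right)$; on $V_2$ $(-q,-1,q)$; on $V_3$ $(-q,\,q^{n-1}-1,\,q-q^{n-1})$. A point-pencil is the set of all affine lines through a fixed affine point. *)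

From HB Require Import structures.
From mathcomp Require Import all_boot all_order all_algebra all_field.
Set Implicit Arguments. Unset Strict Implicit. Unset Printing Implicit Defensive.
Import Order.TTheory GRing.Theory Num.Theory.
Local Open Scope ring_scope.

(* AG(n,q): points are row vectors 'rV[F]_n over a finite field F with q = #|F|. *)
Section AG.
Variables (F : finFieldType) (n : nat).

Definition point := 'rV[F]_n.

Definition is_line (L : {set point}) : bool :=
  [exists a : point, exists d : point,
     (d != 0) && (L == [set a + t *: d | t : F])].

Definition line := {L : {set point} | is_line L}.
HB.instance Definition _ := Finite.on line.

(* two affine lines are parallel (same point at infinity) iff one is a translate
   of the other *)
Definition parallel (l l' : line) : bool :=
  [exists u : point, val l' == [set x + u | x in val l]].

Definition rel1 (l l' : line) : bool :=
  (l != l') && (val l :&: val l' != set0).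
Definition rel2 (l l' : line) : bool :=
  (l != l') && parallel l l'.
(* R_3 : disjoint in PG(n,q): no common affine point, not parallel *)
Definition rel3 (l l' : line) : bool :=
  (val l :&: val l' == set0) && ~~ parallel l l'.

Variable R : realFieldType.

Definition vec := {ffun line -> R^o}.

Definition adj (rel : line -> line -> bool) (v : vec) : vec :=
  [ffun l => \sum_(l' | rel l l') v l'].

Definition B1 := adj rel1.
Definition B2 := adj rel2.
Definition B3 := adj rel3.

Definition qR : R := (#|F|)%:R.

(* eigenvalue triples (on B1, B2, B3) for V_0, V_1, V_2, V_3 *)
Definition eigvals (i : 'I_4) : R * R * R :=
  let q := qR in
  match val i with
  | 0%N => ((q ^+ n.+1 - q ^+ 2) / (q - 1), q ^+ n.-1 - 1,
            (q ^+ 2 - (q + 1) * q ^+ n + q ^+ (2 * n).-1) / (q - 1))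
  | 1%N => ((q ^+ n - q ^+ 2) / (q - 1), -1, (q ^+ 2 - q ^+ n) / (q - 1))
  | 2%N => (- q, -1, q)
  | _ => (- q, q ^+ n.-1 - 1, q - q ^+ n.-1)
  end.

Definition inV (i : 'I_4) (v : vec) : Prop :=
  let: (a, b, c) := eigvals i in
  [/\ B1 v = a *: v, B2 v = b *: v & B3 v = c *: v].

Definition pencil (p : point) : vec := [ffun l : line => (p \in val l)%:R].

Definition pencils : seq vec := [seq pencil p | p : point].

End AG.

From HB Require Import structures.
From mathcomp Require Import all_boot all_order all_algebra all_field.
From mathcomp Require Import ring lra zify.
Set Implicit Arguments. Unset Strict Implicit. Unset Printing Implicit Defensive.
Import Order.TTheory GRing.Theory Num.Theory.
Local Open Scope ring_scope.

(* The pencils are the rows of the point-line incidence matrix M of AG(n,q).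
   Two distinct points lie on exactly one line, so M M^T = (r - 1) I + J, where
   r = (q^n - 1)/(q - 1) is the number of lines through a point; this matrix is
   positive definite, hence the pencils are linearly independent.  Two distinct
   lines meet in at most one point, so M^T M = q I + B1: every eigenvector of B1
   whose eigenvalue differs from -q lies in the row space of M, which gives
   V0 + V1 <= span.  Conversely the all-ones vector, the sum of the pencils
   divided by q, lies in V0, and every pencil minus q^(1-n) times the all-ones
   vector lies in V1: B1 and B2 act on a pencil by explicit incidence counts,
   and B3 = J - I - B1 - B2. *)

Lemma double_count (I J : finType) (P : pred I) (Q : pred J) (f : I -> J -> bool) :
  (\sum_(i | P i) #|[set j | Q j && f i j]| =
   \sum_(j | Q j) #|[set i | P i && f i j]|)%N.
Proof.
under eq_bigr do rewrite -sum1dep_card.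
rewrite (exchange_big_dep Q) /=; last by move=> i j _ /andP[].
apply: eq_bigr => j Qj; rewrite -sum1dep_card.
by apply: eq_bigl => i; rewrite Qj.
Qed.

Lemma sum_nat_bool (R : pzSemiRingType) (I : finType) (P Q : pred I) :
  \sum_(i | P i) ((Q i)%:R : R) = #|[set i | P i && Q i]|%:R.
Proof.
rewrite -natr_sum -sum1dep_card big_mkcond [in RHS]big_mkcond.
by congr _%:R; apply: eq_bigr => i _; case: (P i); case: (Q i).
Qed.

Section SpanFree.
Variables (K : fieldType) (vT : vectType K).

Lemma span_ind (P : vT -> Prop) (X : seq vT) :
  P 0 -> (forall a u w, P u -> P w -> P (a *: u + w)) -> {in X, forall x, P x} ->
  forall v, v \in <<X>>%VS -> P v.
Proof.
move=> P0 Plin PX v Xv; rewrite (coord_span (X := in_tuple X) Xv).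
apply: (big_ind P) => [//| u w Pu Pw | i _].
- by have := Plin 1 u w Pu Pw; rewrite scale1r.
- have := Plin (coord (in_tuple X) i v) _ 0 (PX _ (mem_nth 0 (ltn_ord i))) P0.
  by rewrite addr0.
Qed.

Lemma free_image (T : finType) (f : T -> vT) :
  (forall k : T -> K, \sum_x k x *: f x = 0 -> forall x, k x = 0) ->
  free [seq f x | x : T].
Proof.
move=> f_indep; change (free (image_tuple f T)); apply/freeP => k k0 i.
rewrite -[i]enum_valK; apply: (f_indep (fun x => k (enum_rank x))); rewrite -{}[RHS]k0.
rewrite (reindex (enum_val : 'I_#|T| -> T)) /=; last exact/onW_bij/enum_val_bij.
by apply: eq_bigr => j _; rewrite enum_valK nth_image.
Qed.

End SpanFree.

Section AffineLines.
Variables (F : finFieldType) (n : nat).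
Local Notation point := (point F n).
Local Notation line := (line F n).

Definition aline (a d : point) : {set point} := [set a + t *: d | t : F].

Lemma aline_reparam a d s c :
  c != 0 -> aline a d = aline (a + s *: d) (c *: d).
Proof.
move=> c0; apply/setP => x; apply/imsetP/imsetP => [[t _ ->]|[t _ ->]].
  exists ((t - s) / c) => //; rewrite scalerA mulfVK // -addrA -scalerDl.
  by rewrite [s + _]addrC subrK.
by exists (s + t * c) => //; rewrite scalerA -addrA -scalerDl.
Qed.

Lemma aline_base a d : a \in aline a d.
Proof. by apply/imsetP; exists 0 => //; rewrite scale0r addr0. Qed.

Lemma aline_shift a d x : x \in aline a d -> aline a d = aline x d.
Proof.
by case/imsetP => s _ ->; rewrite (aline_reparam a d s (oner_neq0 F)) scale1r.
Qed.

Lemma aline_through2 a d x y : x \in aline a d -> y \in aline a d -> x != y ->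
  aline a d = aline x (y - x).
Proof.
case/imsetP => s _ ->; case/imsetP => s' _ -> nxy.
rewrite opprD addrACA subrr add0r -scalerBl -aline_reparam //.
by apply: contraNneq nxy => /eqP; rewrite subr_eq0 => /eqP ->.
Qed.

Lemma is_line_aline a d : d != 0 -> is_line (aline a d).
Proof.
by move=> d0; apply/existsP; exists a; apply/existsP; exists d; rewrite d0 eqxx.
Qed.

Lemma lineP (l : line) : exists a d, d != 0 /\ val l = aline a d.
Proof. by have /existsP[a /existsP[d /andP[d0 /eqP ->]]] := valP l; exists a, d. Qed.

Lemma line_through2 (l : line) x y : x \in val l -> y \in val l -> x != y ->
  val l = aline x (y - x).
Proof. by have [a [d [_ ->]]] := lineP l; exact: aline_through2. Qed.

Lemma eq_line2 (l l' : line) x y : x != y ->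
  x \in val l -> y \in val l -> x \in val l' -> y \in val l' -> l = l'.
Proof.
move=> nxy xl yl xl' yl'; apply: val_inj.
by rewrite (line_through2 xl yl nxy) (line_through2 xl' yl' nxy).
Qed.

Lemma card_lines_through2 x y : x != y ->
  #|[set l : line | (x \in val l) && (y \in val l)]| = 1%N.
Proof.
move=> nxy; have d0 : y - x != 0 by rewrite subr_eq0 eq_sym.
pose l0 : line := Sub (aline x (y - x)) (is_line_aline x d0).
have yl0 : y \in val l0 by apply/imsetP; exists 1; rewrite // scale1r addrC subrK.
rewrite (_ : [set l : line | _] = [set l0]) ?cards1 //; apply/setP => l.
rewrite !inE; apply/andP/eqP => [[xl yl] | ->]; last by rewrite yl0 aline_base.
by apply: (eq_line2 nxy xl yl) => //; exact: aline_base.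
Qed.

Lemma card_line (l : line) : #|val l| = #|F|.
Proof.
have [a [d [d0 ->]]] := lineP l; rewrite card_imset // => s t /addrI /eqP.
by rewrite -subr_eq0 -scalerBl scaler_eq0 (negbTE d0) orbF subr_eq0 => /eqP.
Qed.

Lemma card_meet_neq (l l' : line) : l != l' -> #|val l :&: val l'| = rel1 l l'.
Proof.
move=> nll; rewrite /rel1 nll -card_gt0; case: posnP => [-> // | meet_gt0].
apply/eqP; rewrite eqn_leq meet_gt0 andbT leqNgt.
apply/negP => /card_gt1P[x [y [/setIP[xl xl'] /setIP[yl yl'] nxy]]].
by case/eqP: nll; exact: eq_line2 nxy xl yl xl' yl'.
Qed.

Lemma card_meet (l l' : line) :
  #|val l :&: val l'| = ((l == l') * #|F| + rel1 l l')%N.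
Proof.
case: eqVneq => [<-|nll]; last by rewrite card_meet_neq.
by rewrite setIid card_line /rel1 eqxx mul1n addn0.
Qed.

Lemma parallel_aline (l l' : line) a d p :
  val l = aline a d -> parallel l l' -> p \in val l' -> val l' = aline p d.
Proof.
move=> la /existsP[u /eqP l'E].
have l'au : val l' = aline (a + u) d.
  rewrite l'E la; apply/setP => x; apply/imsetP/imsetP.
    by case=> _ /imsetP[t _ ->] ->; exists t; rewrite // addrAC.
  by case=> t _ ->; exists (a + t *: d); [apply/imsetP; exists t | rewrite addrAC].
by rewrite l'au => /aline_shift.
Qed.

Lemma parallel_disjoint (l l' : line) :
  parallel l l' -> l != l' -> val l :&: val l' = set0.
Proof.
move=> ll' nll; apply/setP => p; rewrite !inE; apply/andP => -[pl pl'].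
have [a [d [_ la]]] := lineP l; case/eqP: nll; apply: val_inj.
by rewrite (parallel_aline la ll' pl') la (aline_shift (_ : p \in aline a d)) -?la.
Qed.

Lemma card_parallel_through (l : line) p :
  #|[set l' | rel2 l l' && (p \in val l')]| = (p \notin val l).
Proof.
have [a [d [d0 la]]] := lineP l; case: (boolP (p \in val l)) => pl /=.
  apply/eqP; rewrite cards_eq0; apply/eqP/setP => l'; rewrite !inE.
  apply/andP => -[/andP[nll ll'] pl'].
  by have /setP/(_ p) := parallel_disjoint ll' nll; rewrite !inE pl pl'.
have [lp lpE] : {lp : line | val lp = aline p d}.
  exact: exist _ (Sub _ (is_line_aline p d0)) erefl.
rewrite (_ : [set _ | _] = [set lp]) ?cards1 //; apply/setP => l'.
rewrite !inE /rel2; apply/idP/eqP => [/andP[/andP[_ ll'] pl'] | ->].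
  by apply: val_inj; rewrite lpE; exact: parallel_aline la ll' pl'.
rewrite lpE aline_base andbT; apply/andP; split.
  by apply: contraNneq pl => ->; rewrite lpE aline_base.
have shift t : a + t *: d + (p - a) = p + t *: d.
  by rewrite addrAC [a + _]addrC subrK.
apply/existsP; exists (p - a); apply/eqP/setP => x; rewrite lpE la.
apply/imsetP/imsetP => [[t _ ->] | [_ /imsetP[t _ ->] ->]].
  by exists (a + t *: d); rewrite ?shift //; apply/imsetP; exists t.
by exists t; rewrite ?shift.
Qed.

Lemma rel_partition (l l' : line) :
  ((l == l') + rel1 l l' + rel2 l l' + rel3 l l')%N = 1%N.
Proof.
rewrite /rel1 /rel2 /rel3; case: eqVneq => [<-|nll] /=.
  have l_neq0 : val l != set0.
    by rewrite -card_gt0 card_line (ltn_trans _ (finNzRing_gt1 F)).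
  by rewrite setIid (negbTE l_neq0).
have [ll'|] := boolP (parallel l l'); first by rewrite parallel_disjoint ?eqxx.
by case: eqP.
Qed.

Definition pencil_card (p : point) := #|[set l : line | p \in val l]|.

Lemma pencil_cardE p : (pencil_card p * (#|F| - 1) = #|point| - 1)%N.
Proof.
have := double_count (fun l : line => p \in val l) (predC1 p) (fun l x => x \in val l).
rewrite (eq_bigr (fun _ => #|F| - 1)%N) => [|l pl]; last first.
  rewrite -(card_line l) [#|val l|](cardsD1 p) pl add1n subSS subn0.
  by apply: eq_card => x; rewrite !inE andbC.
rewrite [RHS](eq_bigr (fun _ => 1%N)) => [|x /= xp]; last first.
  by rewrite card_lines_through2 // eq_sym.
rewrite !sum_nat_cond_const muln1 => ->; rewrite subn1 -(cardC1 p).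
by apply: eq_card => x; rewrite !inE.
Qed.

Lemma pencil_card_const p : pencil_card p = pencil_card 0%R.
Proof.
have q1_gt0 : (0 < #|F| - 1)%N by rewrite subn_gt0 finNzRing_gt1.
by apply/eqP; rewrite -(eqn_pmul2r q1_gt0) !pencil_cardE.
Qed.

Lemma card_rel1_through_off (l : line) p : p \notin val l ->
  #|[set l' | rel1 l l' && (p \in val l')]| = #|F|.
Proof.
move=> pl; have := double_count (fun l' : line => p \in val l') (mem (val l))
  (fun l' x => x \in val l').
rewrite (eq_bigr (fun l' => nat_of_bool (rel1 l l'))) => [|l' pl']; last first.
  have nll : l != l' by apply: contraNneq pl => ->.
  by rewrite -(card_meet_neq nll); apply: eq_card => x; rewrite !inE.
rewrite [RHS](eq_bigr (fun _ => 1%N)) => [|x xl]; last first.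
  by rewrite card_lines_through2 //; apply: contraNneq pl => ->.
rewrite sum_nat_cond_const muln1 (eq_card (B := val l)) => [|x]; last by rewrite inE.
rewrite card_line => <-; rewrite -sum1dep_card big_mkcond [RHS]big_mkcond /=.
apply: eq_bigr => l' _.
by rewrite andbC; case: (p \in val l'); case: (rel1 l l').
Qed.

Lemma card_rel1_through_on (l : line) p : p \in val l ->
  (#|[set l' | rel1 l l' && (p \in val l')]|).+1 = pencil_card p.
Proof.
move=> pl; rewrite /pencil_card [RHS](cardsD1 l) inE pl add1n; congr _.+1.
apply: eq_card => l'; rewrite !inE /rel1 eq_sym.
case: (boolP (p \in val l')) => pl'; rewrite ?andbF ?andbT //.
by case: eqVneq => //= _; apply/set0Pn; exists p; rewrite inE pl pl'.
Qed.

Lemma card_lines_mul : (#|{: line}| * #|F| = #|{: point}| * pencil_card 0%R)%N.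
Proof.
have := double_count predT predT (fun (l : line) (x : point) => x \in val l).
rewrite (eq_bigr (fun _ => #|F|)) => [|l _]; last first.
  by rewrite -(card_line l); apply: eq_card => x; rewrite inE.
rewrite [RHS](eq_bigr (fun _ => pencil_card 0)) => [|x _]; last first.
  by rewrite -(pencil_card_const x); apply: eq_card => l; rewrite !inE.
by rewrite !sum_nat_cond_const !cardsT.
Qed.

End AffineLines.

Section IncidenceAlgebra.
Variables (F : finFieldType) (n : nat) (R : realFieldType).
Local Notation point := (point F n).
Local Notation line := (line F n).
Local Notation vec := (vec F n R).
Local Notation q := (qR F R).
Local Notation r := ((pencil_card (0 : point))%:R : R).
Local Notation pencil := (pencil R).

Lemma adj_is_linear (rel : line -> line -> bool) : linear (@adj F n R rel).
Proof.
move=> a u w; apply/ffunP => l; rewrite !ffunE.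
by under eq_bigr do rewrite !ffunE; rewrite big_split scaler_sumr.
Qed.

HB.instance Definition _ rel :=
  GRing.isLinear.Build R vec vec *:%R (adj rel) (adj_is_linear rel).
HB.instance Definition _ := GRing.Linear.on (@B1 F n R).
HB.instance Definition _ := GRing.Linear.on (@B2 F n R).
HB.instance Definition _ := GRing.Linear.on (@B3 F n R).

Lemma scale_regE (a b : R) : a *: (b : R^o) = a * b.
Proof. by []. Qed.

Lemma sum_vecE (I : finType) (f : I -> vec) l : (\sum_i f i) l = \sum_i (f i l : R).
Proof. by rewrite sum_ffunE. Qed.

Definition allones : vec := [ffun => 1].

Definition vsum (v : vec) : R := \sum_l v l.

Definition dotv (u w : vec) : R := \sum_l (u l : R) * w l.


Lemma q_gt1 : 1 < q.
Proof. by rewrite ltr1n finNzRing_gt1. Qed.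

Lemma q_neq0 : q != 0.
Proof. by rewrite gt_eqF // (lt_trans ltr01 q_gt1). Qed.

Lemma card_point_natr : #|{: point}|%:R = q ^+ n.
Proof. by rewrite card_mx mul1n natrX. Qed.

Lemma pencil_card_natr_mul : r * (q - 1) = q ^+ n - 1.
Proof.
have := congr1 (GRing.natmul (1 : R)) (pencil_cardE (0 : point)).
rewrite card_mx mul1n natrM !natrB ?expn_gt0 ?finNzRing_gt0 ?(ltnW (finNzRing_gt1 _)) //.
by rewrite natrX.
Qed.

Lemma card_lines_natr_mul : #|{: line}|%:R * q = q ^+ n * r.
Proof.
have := congr1 (GRing.natmul (1 : R)) (card_lines_mul F n).
by rewrite card_mx mul1n !natrM natrX.
Qed.

Lemma sum_pencils : \sum_p pencil p = q *: allones.
Proof.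
apply/ffunP => l; rewrite sum_ffunE !ffunE scale_regE mulr1.
under eq_bigr do rewrite ffunE.
by rewrite sum_nat_bool /qR -(card_line l); congr _%:R; apply: eq_card => x; rewrite inE.
Qed.

Lemma vsum_lin a u w : vsum (a *: u + w) = a * vsum u + vsum w.
Proof.
rewrite /vsum mulr_sumr -big_split; apply: eq_bigr => l _.
by rewrite !ffunE scale_regE.
Qed.

Lemma vsum_pencil (p : point) : vsum (pencil p) = r.
Proof.
rewrite /vsum; under eq_bigr do rewrite ffunE.
by rewrite sum_nat_bool -(pencil_card_const p); congr _%:R.
Qed.

Lemma B1_pencil p : B1 (pencil p) = (r - 1 - q) *: pencil p + q *: allones.
Proof.
apply/ffunP => l; rewrite !ffunE; under eq_bigr do rewrite ffunE.
rewrite sum_nat_bool !scale_regE mulr1; case: (boolP (p \in val l)) => pl.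
  rewrite -(pencil_card_const p) -(card_rel1_through_on pl) mulr1 -natr1.
  by rewrite addrK subrK.
by rewrite card_rel1_through_off // mulr0 add0r.
Qed.

Lemma B2_pencil p : B2 (pencil p) = allones - pencil p.
Proof.
apply/ffunP => l; rewrite !ffunE; under eq_bigr do rewrite ffunE.
by rewrite sum_nat_bool card_parallel_through; case: (p \in val l); rewrite ?subrr ?subr0.
Qed.

Lemma B3E (x : vec) : B3 x = vsum x *: allones - x - B1 x - B2 x.
Proof.
apply/ffunP => l; rewrite !ffunE scale_regE mulr1 /vsum.
have sum_rel (rel : pred line) : \sum_l' (rel l')%:R * x l' = \sum_(l' | rel l') x l'.
  rewrite [RHS]big_mkcond; apply: eq_bigr => l' _.
  by case: (rel l'); rewrite ?mul1r ?mul0r.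
have -> : \sum_l' x l' = \sum_(l' | l' == l) x l' + \sum_(l' | rel1 l l') x l'
    + \sum_(l' | rel2 l l') x l' + \sum_(l' | rel3 l l') x l'.
  rewrite -!sum_rel -!big_split; apply: eq_bigr => l' _ /=.
  by rewrite -!mulrDl -!natrD [l' == l]eq_sym rel_partition.
rewrite big_pred1_eq.
(* The values of [x] live in [R^o], on which [ring] does not operate directly. *)
have regroup (a b c d : R) : d = a + b + c + d - a - b - c by ring.
exact: regroup.
Qed.


Lemma B3_eigen v a b : B1 v = a *: v -> B2 v = b *: v ->
  B3 v = vsum v *: allones - (1 + a + b) *: v.
Proof. by move=> B1v B2v; rewrite B3E B1v B2v !scalerDl scale1r !opprD !addrA. Qed.

Lemma vsum_allones : vsum allones = #|{: line}|%:R.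
Proof. by rewrite /vsum; under eq_bigr do rewrite ffunE; rewrite sumr_const. Qed.

Lemma B1_allones : B1 allones = (q * (r - 1)) *: allones.
Proof.
apply: (scalerI q_neq0); rewrite -linearZ -sum_pencils linear_sum /=.
under eq_bigr do rewrite B1_pencil.
rewrite big_split /= -scaler_sumr sumr_const sum_pencils -scaler_nat !scalerA -scalerDl.
congr (_ *: _); rewrite card_point_natr -[q ^+ n](subrK 1) -pencil_card_natr_mul.
ring.
Qed.


Lemma inV0 i : inV i (0 : vec).
Proof.
by rewrite /inV; case: (eigvals F n R i) => [[x y] z]; split; rewrite linear0 scaler0.
Qed.

Lemma inV_lin i a (u w : vec) : inV i u -> inV i w -> inV i (a *: u + w).
Proof.
rewrite /inV; case: (eigvals F n R i) => [[x y] z] [B1u B2u B3u] [B1w B2w B3w].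
by split; rewrite linearP /= ?B1u ?B1w ?B2u ?B2w ?B3u ?B3w scalerDr !scalerA mulrC.
Qed.

Lemma dotv_sumZl (I : finType) (k : I -> R) (u : I -> vec) w :
  dotv (\sum_i k i *: u i) w = \sum_i k i * dotv (u i) w.
Proof.
transitivity (\sum_l \sum_i k i * ((u i l : R) * w l)).
  apply: eq_bigr => l _; rewrite sum_vecE mulr_suml.
  by apply: eq_bigr => i _; rewrite ffunE scale_regE mulrA.
by rewrite exchange_big; apply: eq_bigr => i _; rewrite mulr_sumr.
Qed.

Lemma dotv_pencils x y : dotv (pencil x) (pencil y) = if x == y then r else 1.
Proof.
rewrite /dotv; under eq_bigr do rewrite !ffunE -natrM mulnb.
rewrite sum_nat_bool; case: eqVneq => [<- | nxy]; last by rewrite card_lines_through2.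
by rewrite -(pencil_card_const x); congr _%:R; apply: eq_card => l; rewrite !inE andbb.
Qed.

Lemma sum_dotv_pencil w : \sum_p dotv (pencil p) w *: pencil p = q *: w + B1 w.
Proof.
apply/ffunP => l; rewrite sum_vecE !ffunE scale_regE.
under eq_bigr do rewrite ffunE scale_regE /dotv mulr_suml.
rewrite exchange_big /=.
transitivity (\sum_l' (w l' : R) * #|val l :&: val l'|%:R).
  apply: eq_bigr => l' _.
  rewrite (_ : _ :&: _ = [set p | (p \in val l) && (p \in val l')]); last first.
    by apply/setP => p; rewrite !inE.
  rewrite -sum_nat_bool mulr_sumr [RHS]big_mkcond; apply: eq_bigr => p _; rewrite !ffunE.
  by case: (p \in val l); case: (p \in val l'); rewrite ?mulr1 ?mulr0 ?mul1r ?mul0r.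
rewrite (eq_bigr (fun l' => w l' * ((l == l')%:R * q) + w l' * (rel1 l l')%:R));
  last first.
  by move=> l' _; rewrite card_meet natrD natrM mulrDr.
rewrite big_split /= (bigD1 l) //= eqxx mul1r big1 => [|l' nl]; last first.
  by rewrite eq_sym (negbTE nl) mul0r mulr0.
rewrite addr0 mulrC [X in _ = _ + X]big_mkcond; congr (_ + _); apply: eq_bigr => l' _.
by case: (rel1 l l'); rewrite ?mulr1 ?mulr0.
Qed.

Lemma B1_eigen_in_span w a : B1 w = a *: w -> a + q != 0 -> w \in <<pencils F n R>>%VS.
Proof.
move=> B1w aq0; have -> : w = (a + q)^-1 *: \sum_p dotv (pencil p) w *: pencil p.
  by rewrite sum_dotv_pencil B1w -scalerDl scalerA [q + a]addrC mulVf // scale1r.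
apply/memvZ/memv_suml => p _; apply/memvZ/memv_span.
exact: image_f.
Qed.

End IncidenceAlgebra.

Section Eigenvectors.
Variables (F : finFieldType) (n : nat) (R : realFieldType).
Hypothesis n_gt1 : (1 < n)%N.
Local Notation point := (point F n).
Local Notation line := (line F n).
Local Notation vec := (vec F n R).
Local Notation q := (qR F R).
Local Notation Q := (qR F R ^+ n.-1).
Local Notation r := ((pencil_card (0 : point))%:R : R).
Local Notation pencil := (pencil R).
Local Notation allones := (allones F n R).

Lemma exprn_predE : q ^+ n = q * Q.
Proof. by rewrite -exprS prednK // ltnW. Qed.

Lemma Q_gt1 : 1 < Q.
Proof. by rewrite exprn_egt1 ?q_gt1 // -lt0n -subn1 subn_gt0. Qed.

Lemma pencil_card_natrE : r = (q * Q - 1) / (q - 1).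
Proof.
by rewrite -exprn_predE -pencil_card_natr_mul mulfK // subr_eq0 gt_eqF ?q_gt1.
Qed.

Lemma pencil_card_natr_gt1 : 1 < r.
Proof.
have q1 := q_gt1 F R; have Q1 := Q_gt1.
by rewrite pencil_card_natrE ltr_pdivlMr ?subr_gt0 // mul1r; nra.
Qed.

Lemma card_lines_natrE : #|{: line}|%:R = Q * r.
Proof. by apply: (mulIf (q_neq0 F R)); rewrite card_lines_natr_mul exprn_predE; ring. Qed.

Lemma B2_allones : B2 allones = (Q - 1) *: allones.
Proof.
apply: (scalerI (q_neq0 F R)); rewrite -linearZ -sum_pencils linear_sum /=.
under eq_bigr do rewrite B2_pencil.
rewrite sumrB sumr_const sum_pencils -scaler_nat scalerA -scalerBl card_point_natr.
by rewrite exprn_predE; congr (_ *: _); ring.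
Qed.

Lemma eigvals0E :
  eigvals F n R ord0 = (q * (r - 1), Q - 1, Q * r - 1 - q * (r - 1) - (Q - 1)).
Proof.
have q1_neq0 : q - 1 != 0 by rewrite subr_eq0 gt_eqF ?q_gt1.
have exp2n : q ^+ (2 * n).-1 = q * Q * Q.
  have -> : (2 * n).-1 = (n.-1 + n.-1).+1 by lia.
  by rewrite exprS exprD mulrA.
rewrite /eigvals /= exp2n exprS exprn_predE pencil_card_natrE !expr2.
by congr (_, _, _); field.
Qed.

Lemma eigvals1E : eigvals F n R (inord 1) = (r - 1 - q, -1, q + 1 - r).
Proof.
have q1_neq0 : q - 1 != 0 by rewrite subr_eq0 gt_eqF ?q_gt1.
rewrite /eigvals /= inordK //= exprn_predE pencil_card_natrE expr2.
by congr (_, _, _); field.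
Qed.

Lemma inV_allones : inV ord0 allones.
Proof.
rewrite /inV eigvals0E; split; [exact: B1_allones | exact: B2_allones |].
rewrite (B3_eigen (B1_allones F n R) B2_allones) vsum_allones card_lines_natrE -scalerBl.
by rewrite !opprD !addrA.
Qed.

Lemma inV1_pencil p : inV (inord 1) (pencil p - Q^-1 *: allones).
Proof.
have Q_neq0 : Q != 0 by rewrite gt_eqF // (lt_trans ltr01 Q_gt1).
have q1_neq0 : q - 1 != 0 by rewrite subr_eq0 gt_eqF ?q_gt1.
have B1v : B1 (pencil p - Q^-1 *: allones) = (r - 1 - q) *: (pencil p - Q^-1 *: allones).
  rewrite linearB linearZ /= B1_pencil B1_allones scalerBr !scalerA -addrA -scalerBl.
  have -> : q - Q^-1 * (q * (r - 1)) = - ((r - 1 - q) * Q^-1).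
    by rewrite pencil_card_natrE; field; rewrite Q_neq0.
  by rewrite scaleNr.
have B2v : B2 (pencil p - Q^-1 *: allones) = -1 *: (pencil p - Q^-1 *: allones).
  rewrite linearB linearZ /= B2_pencil B2_allones scaleN1r opprB scalerA.
  have -> : Q^-1 * (Q - 1) = 1 - Q^-1 by field.
  by rewrite scalerBl scale1r opprB addrC addrA subrK.
rewrite /inV eigvals1E; split => //; rewrite (B3_eigen B1v B2v).
have -> : vsum (pencil p - Q^-1 *: allones) = 0.
  rewrite addrC -scaleNr vsum_lin vsum_pencil vsum_allones card_lines_natrE.
  by rewrite mulNr mulrA mulVf // mul1r addNr.
by rewrite scale0r add0r -scaleNr; congr (_ *: _); ring.
Qed.



Lemma span_pencils_sub v : v \in <<pencils F n R>>%VS ->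
  exists v0 v1, [/\ inV ord0 v0, inV (inord 1) v1 & v = v0 + v1].
Proof.
pose V01 := fun v : vec =>
  exists v0 v1 : vec, [/\ inV ord0 v0, inV (inord 1) v1 & v = v0 + v1].
move: v; apply: (span_ind (P := V01)) =>
  [| a u w [u0 [u1 [u0V u1V ->]]] [w0 [w1 [w0V w1V ->]]] |].
- by exists 0, 0; rewrite addr0; split; try exact: inV0.
- exists (a *: u0 + w0), (a *: u1 + w1); split; try exact: inV_lin.
  by rewrite scalerDr addrACA.
- move=> _ /imageP[p _ ->]; exists (Q^-1 *: allones), (pencil p - Q^-1 *: allones).
  split; [| exact: inV1_pencil | by rewrite addrC subrK].
  by have := inV_lin (Q^-1) inV_allones (inV0 F n R ord0); rewrite addr0.
Qed.

Lemma inV0_in_span v : inV ord0 v -> v \in <<pencils F n R>>%VS.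
Proof.
rewrite /inV eigvals0E => -[B1v _ _]; apply: (B1_eigen_in_span B1v).
have r1 := pencil_card_natr_gt1; have q1 := q_gt1 F R.
by rewrite gt_eqF //; nra.
Qed.

Lemma inV1_in_span v : inV (inord 1) v -> v \in <<pencils F n R>>%VS.
Proof.
rewrite /inV eigvals1E => -[B1v _ _]; apply: (B1_eigen_in_span B1v).
by rewrite subrK subr_eq0 gt_eqF ?pencil_card_natr_gt1.
Qed.

Lemma free_pencils : free (pencils F n R).
Proof.
apply: free_image => k k0 y; pose K := \sum_x k x.
have r1_gt0 : 0 < r - 1 by rewrite subr_gt0 pencil_card_natr_gt1.
have k_dot z : k z * (r - 1) + K = 0.
  have := congr1 (fun u => dotv u (pencil z)) k0; rewrite /= dotv_sumZl.
  rewrite [dotv 0 _]big1 => [|l _]; last by rewrite ffunE mul0r.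
  under eq_bigr do rewrite dotv_pencils.
  rewrite (bigD1 z) //= eqxx; under eq_bigr => x /negbTE -> do rewrite mulr1.
  by move=> kz0; rewrite /K (bigD1 z) //= -[RHS]kz0; ring.
have K0 : K = 0.
  have : \sum_z (k z * (r - 1) + K) = K * (r - 1 + q ^+ n).
    rewrite big_split /= -mulr_suml sumr_const card_mx mul1n -[K *+ _]mulr_natr natrX.
    by rewrite /K; ring.
  rewrite big1 // => /esym/eqP; rewrite mulf_eq0 => /orP[/eqP //|].
  have qn_ge0 : 0 <= q ^+ n by rewrite exprn_ge0 // ler0n.
  by rewrite gt_eqF //; lra.
by have /eqP := k_dot y; rewrite K0 addr0 mulf_eq0 (gt_eqF r1_gt0) orbF => /eqP.
Qed.

End Eigenvectors.

Unset Implicit Arguments.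

Theorem theorem5p13 (F : finFieldType) (n : nat) (R : realFieldType) :
  (3 <= n)%N ->
  free (pencils F n R) /\
  (forall v : vec F n R,
     v \in <<pencils F n R>>%VS <->
     exists v0 v1 : vec F n R,
       [/\ inV ord0 v0, inV (inord 1) v1 & v = v0 + v1]).
Proof.
move=> n_ge3; have n_gt1 : (1 < n)%N by exact: ltnW.
split; first exact: free_pencils.
move=> v; split; first exact: span_pencils_sub.
case=> v0 [v1 [/(inV0_in_span n_gt1) v0_span /(inV1_in_span n_gt1) v1_span ->]].
exact: memvD.
Qed.
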